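(* Let $\mathbb K\subset\mathbb{R}^n$ be bounded and let $f:\mathbb K\to\mathbb{R}$ be 1-Lipschitz with respect to the $\ell_\infty$-norm. Then for every $\epsilon>0$ there exist finitely many functions $f_1,\dots,f_m$ such that for all $\mathbf x\in\mathbb K$, $$\max_i f_i(\mathbf x)\le f(\mathbf x)\le\max_i f_i(\mathbf x)+\epsilon,$$ where each $f_i$ has the form $f_i(\mathbf x)=\min_{1\le j\le n}\{x_j-w^{(i)}_j,\;w^{(i)}_j-x_j\}+b_i$ for some $\mathbf w^{(i)}\in\mathbb{R}^n$ and $b_i\in\mathbb{R}$. *)

From HB Require Import structures.
From mathcomp Require Import all_boot all_order all_algebra.
From mathcomp Require Import reals.
Set Implicit Arguments. Unset Strict Implicit. Unset Printing Implicit Defensive.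
Import Order.TTheory GRing.Theory Num.Theory.
Local Open Scope ring_scope.

Definition linf_dist (R : realType) (n : nat) (x y : 'I_n -> R) : R :=
  \big[Num.max/0]_(j < n) `|x j - y j|.

Definition bounded_set (R : realType) (n : nat) (K : ('I_n -> R) -> Prop) : Prop :=
  exists M : R, forall x, K x -> forall j, `|x j| <= M.

Definition lip1_linf (R : realType) (n : nat) (K : ('I_n -> R) -> Prop)
  (f : ('I_n -> R) -> R) : Prop :=
  forall x y, K x -> K y -> `|f x - f y| <= linf_dist x y.

Definition min_unit (R : realType) (n : nat) (w : 'I_n.+1 -> R) (b : R)
  (x : 'I_n.+1 -> R) : R :=
  \big[Num.min/Num.min (x ord0 - w ord0) (w ord0 - x ord0)]_(j < n.+1)
     Num.min (x j - w j) (w j - x j) + b.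

(** [min_unit w b] is the cone [x |-> b - |x - w|_oo].
    Each cone [min_unit w (f w)] with apex [w] in [K] lies below the
    1-Lipschitz function [f], and at a point [x] it is below [f x] by at most
    twice the distance from [x] to [w].  Since [K] is bounded, it contains
    finitely many points such that every point of [K] is within [eps / 2] of
    one of them; the maximum of the cones at these points is then within
    [eps] of [f] from below. *)
From mathcomp Require Import all_boot all_order all_algebra.
From mathcomp Require Import boolp reals.
From mathcomp Require Import lra.
Set Implicit Arguments. Unset Strict Implicit.
Import Order.TTheory GRing.Theory Num.Theory.
Local Open Scope ring_scope.

Section LinfDist.
Variables (R : realType) (n : nat).
Implicit Types (x y z : 'I_n -> R).

Lemma linf_dist_ge0 x y : 0 <= linf_dist x y.
Proof. exact: bigmax_ge_id. Qed.

Lemma le_linf_dist x y j : `|x j - y j| <= linf_dist x y.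
Proof. exact: le_bigmax. Qed.

Lemma linf_dist_le x y (e : R) :
  0 <= e -> (forall j, `|x j - y j| <= e) -> linf_dist x y <= e.
Proof. by move=> e_ge0 xy_le; apply: bigmax_le. Qed.

Lemma linf_distC x y : linf_dist x y = linf_dist y x.
Proof. by apply: eq_bigr => j _; rewrite distrC. Qed.

Lemma linf_dist_triangle x y z :
  linf_dist x z <= linf_dist x y + linf_dist y z.
Proof.
apply: linf_dist_le => [|j]; first by rewrite addr_ge0 ?linf_dist_ge0.
exact: le_trans (ler_distD (y j) _ _) (lerD (le_linf_dist _ _ _) (le_linf_dist _ _ _)).
Qed.

End LinfDist.

Lemma min_sub_oppr_norm (R : realDomainType) (a c : R) :
  Num.min (a - c) (c - a) = - `|a - c|.
Proof.
case: (lerP 0 (a - c)) => h.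
  by rewrite ger0_norm // min_r ?opprB //; lra.
by rewrite ltr0_norm // opprK min_l //; lra.
Qed.

Lemma min_unitE (R : realType) (n : nat) (w : 'I_n.+1 -> R) (b : R) x :
  min_unit w b x = b - linf_dist x w.
Proof.
rewrite /min_unit [b - _]addrC; congr (_ + _).
have [j0 _ dist_j0] := @eq_bigmax _ _ _ (0 : R) ord0 predT
  (fun j => `|x j - w j|) isT (fun j _ => normr_ge0 _).
apply/le_anti/andP; split.
  by apply: le_trans (bigmin_le _ j0 _) _; rewrite min_sub_oppr_norm -dist_j0.
by apply: le_bigmin => [|j _]; rewrite min_sub_oppr_norm lerN2 le_linf_dist.
Qed.

Section Cones.
Variables (R : realType) (n : nat) (K : ('I_n.+1 -> R) -> Prop).
Variable f : ('I_n.+1 -> R) -> R.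
Hypothesis f_lip : lip1_linf K f.

Lemma min_unit_le_lip1 w x : K w -> K x -> min_unit w (f w) x <= f x.
Proof.
move=> Kw Kx; rewrite min_unitE.
by have := f_lip Kx Kw; rewrite ler_norml => /andP[? ?]; lra.
Qed.

Lemma lip1_le_min_unit w x :
  K w -> K x -> f x <= min_unit w (f w) x + 2 * linf_dist x w.
Proof.
move=> Kw Kx; rewrite min_unitE.
by have := f_lip Kx Kw; rewrite ler_norml => /andP[? ?]; lra.
Qed.

End Cones.

Lemma grid_point_near (R : archiRealFieldType) (M d t : R) : 0 < d -> `|t| <= M ->
  exists k : 'I_(Num.truncn (2 * M / d)).+1, `|t - (- M + k%:R * d)| <= d.
Proof.
move=> d_gt0; rewrite ler_norml => /andP[tl tr].
set s := (t + M) / d.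
have s_ge0 : 0 <= s by rewrite divr_ge0 ?(ltW d_gt0) //; lra.
have s_le : s <= 2 * M / d by rewrite ler_pM2r ?invr_gt0 //; lra.
have k_lt : (Num.truncn s < (Num.truncn (2 * M / d)).+1)%N.
  by rewrite ltnS le_truncn.
exists (Ordinal k_lt) => /=.
have /andP[k_le s_lt] := truncn_itv s_ge0.
have t_eq : t = s * d - M by rewrite /s mulfVK ?gt_eqF //; lra.
have : 0 <= (s - (Num.truncn s)%:R) * d by rewrite mulr_ge0 ?(ltW d_gt0) ?subr_ge0.
have : (s - (Num.truncn s)%:R) * d <= d.
  by rewrite -natr1 in s_lt; rewrite ler_piMl ?(ltW d_gt0) //; lra.
by rewrite t_eq ler_norml => ? ?; apply/andP; split; lra.
Qed.

Section Nets.
Variables (R : realType) (n : nat) (K : ('I_n -> R) -> Prop).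
Hypothesis K_bounded : bounded_set K.

Lemma bounded_finite_net (d : R) : 0 < d ->
  exists (T : finType) (c : T -> 'I_n -> R),
    forall x, K x -> exists k, linf_dist x (c k) <= d.
Proof.
move=> d_gt0; have [M K_le] := K_bounded.
pose T := {ffun 'I_n -> 'I_(Num.truncn (2 * M / d)).+1}.
exists T, (fun (k : T) j => - M + (k j)%:R * d) => x Kx.
have [k kP] := choice (fun j => grid_point_near d_gt0 (K_le x Kx j)).
exists [ffun j => k j]; apply: linf_dist_le => [|j]; first exact: ltW.
by rewrite ffunE; apply: kP.
Qed.

Lemma bounded_internal_net (e : R) : 0 < e ->
  exists m (p : 'I_m -> 'I_n -> R),
    (forall i, K (p i)) /\ forall x, K x -> exists i, linf_dist x (p i) <= e.
Proof.
move=> e_gt0; have e2_gt0 : 0 < e / 2 by rewrite divr_gt0.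
have [T [c c_net]] := bounded_finite_net e2_gt0.
have [[x0 Kx0]|K0] := pselect (exists x, K x); last first.
  exists 0%N, (fun _ _ => 0); split=> [[] //|x Kx].
  by case: K0; exists x.
pose near k y := K y /\ linf_dist y (c k) <= e / 2.
have near_pick k : exists y, K y /\ ((exists y', near k y') -> near k y).
  have [[y ky]|no_y] := pselect (exists y, near k y); last by exists x0.
  by exists y; split=> //; case: ky.
have [p pP] := choice near_pick.
exists #|T|, (fun i => p (enum_val i)); split=> [i|x Kx].
  by case: (pP (enum_val i)).
have [k xk] := c_net x Kx.
have [_ /(_ (ex_intro _ x (conj Kx xk))) [_ pk]] := pP k.
exists (enum_rank k); rewrite enum_rankK.
apply: le_trans (linf_dist_triangle _ (c k) _) _.
by rewrite (linf_distC (c k)); lra.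
Qed.

End Nets.

Unset Implicit Arguments.

Theorem lemma1 (R : realType) (n : nat) (K : ('I_n.+1 -> R) -> Prop)
  (f : ('I_n.+1 -> R) -> R) :
  bounded_set K -> lip1_linf K f ->
  forall eps : R, 0 < eps ->
  exists (m : nat) (w : 'I_m.+1 -> 'I_n.+1 -> R) (b : 'I_m.+1 -> R),
    forall x, K x ->
      \big[Num.max/min_unit (w ord0) (b ord0) x]_(i < m.+1) min_unit (w i) (b i) x
        <= f x
      /\ f x <= \big[Num.max/min_unit (w ord0) (b ord0) x]_(i < m.+1) min_unit (w i) (b i) x
               + eps.
Proof.
move=> K_bounded f_lip eps eps_gt0.
have eps2_gt0 : 0 < eps / 2 by rewrite divr_gt0.
have [[|m] [p [Kp p_net]]] := bounded_internal_net K_bounded eps2_gt0.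
  exists 0%N, (fun _ _ => 0), (fun _ => 0) => x Kx.
  by have [[]] := p_net x Kx.
exists m, p, (fun i => f (p i)) => x Kx; split.
  by apply: bigmax_le => [|i _]; exact: (min_unit_le_lip1 f_lip (Kp _) Kx).
have [i xi] := p_net x Kx.
apply: le_trans (lip1_le_min_unit f_lip (Kp i) Kx) _.
by apply: lerD; [apply: le_bigmax | lra].
Qed.
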